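(* Let $n,p\ge 1$, let $\boldsymbol{\beta}^{0}\in\mathbb{R}^{p}$, and let $\mathbf{x}_1,\dots,\mathbf{x}_n\in\mathbb{R}^p$ (true covariates), $\mathbf{u}_1,\dots,\mathbf{u}_n\in\mathbb{R}^p$ (measurement errors), $\mathbf{w}_i=\mathbf{x}_i+\mathbf{u}_i$ (measured covariates), and $y_1,\dots,y_n\in\mathbb{R}$ (responses). Let $\mathbf{W}=(\mathbf{w}_1,\dots,\mathbf{w}_n)^T$ and $\mathbf{U}=(\mathbf{u}_1,\dots,\mathbf{u}_n)^T$, with entries $w_{ij}$, $u_{ij}$, and assume the measurements are standardized: $\frac1n\sum_{i=1}^n w_{ij}=0$ and $\frac1n\sum_{i=1}^n w_{ij}^2=1$ for $j=1,\dots,p$. Let $\mu:\mathbb{R}\to\mathbb{R}$ be the GLM mean function, assumed infinitely differentiable with $r$th derivative $\mu^{(r)}$, and assume that for each $i$ its Taylor series around $\mathbf{w}_i^T\boldsymbol{\beta}^0$ converges to $\mu(\mathbf{x}_i^T\boldsymbol{\beta}^0)$, i.e. $$\mu(\mathbf{x}_i^T\boldsymbol{\beta}^0)=\sum_{r=0}^\infty \frac{\mu^{(r)}(\mathbf{w}_i^T\boldsymbol{\beta}^0)}{r!}\left(-\mathbf{u}_i^T\boldsymbol{\beta}^0\right)^r,\quad i=1,\dots,n.$$ Let $\epsilon_i=y_i-\mu(\mathbf{x}_i^T\boldsymbol{\beta}^0)$ and $\boldsymbol{\epsilon}=(\epsilon_1,\dots,\epsilon_n)^T$. Suppose $\lambda\ge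 0$ and $\delta\ge 0$ satisfy $$\frac1n\left\|\mathbf{W}^T\boldsymbol{\epsilon}\right\|_\infty\le\lambda\quad\text{and}\quad \|\mathbf{U}\|_\infty=\max_{i,j}|u_{ij}|\le\delta.$$ Then $\boldsymbol{\beta}^0\in\Theta$, where $$\Theta=\left\{\boldsymbol{\beta}\in\mathbb{R}^p:\ \frac1n\max_{1\le j\le p}\left|\sum_{i=1}^n w_{ij}\left\{y_i-\mu(\mathbf{w}_i^T\boldsymbol{\beta})\right\}\right|\le \lambda+\sum_{r=1}^\infty\frac{\delta^r}{r!\sqrt n}\|\boldsymbol{\beta}\|_1^r\left\|\boldsymbol{\mu}^{(r)}(\mathbf{W}\boldsymbol{\beta})\right\|_2\right\},$$ with $\boldsymbol{\mu}^{(r)}(\mathbf{W}\boldsymbol{\beta})=\left(\mu^{(r)}(\mathbf{w}_1^T\boldsymbol{\beta}),\dots,\mu^{(r)}(\mathbf{w}_n^T\boldsymbol{\beta})\right)^T$.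
   Context: This is the setting of a generalized linear model with canonical link: the response has density $\exp\{y\theta-b(\theta)+c(y,\phi)\}$ with linear predictor $\theta=\mathbf{x}^T\boldsymbol{\beta}^0$, and the mean function is $\mu(\theta)=b'(\theta)$ (e.g. $\mu(\theta)=(1+e^{-\theta})^{-1}$ for logistic regression, $\mu(\theta)=e^\theta$ for Poisson regression). The covariates are observed only through the additive measurement error model $\mathbf{w}_i=\mathbf{x}_i+\mathbf{u}_i$. Here $\|\cdot\|_\infty$ denotes the maximum absolute component (entry) norm of a vector or matrix, $\|\cdot\|_1$ and $\|\cdot\|_2$ the usual $\ell_1$ and $\ell_2$ vector norms. *)

From HB Require Import structures.
From mathcomp Require Import all_boot all_order all_algebra.
From mathcomp Require Import all_classical all_reals all_analysis.
Set Implicit Arguments. Unset Strict Implicit. Unset Printing Implicit Defensive.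
Import Order.TTheory GRing.Theory Num.Theory.
Import numFieldNormedType.Exports.
Local Open Scope ring_scope.

(* Vectors in R^p are functions 'I_p -> R; n x p matrices are 'I_n -> 'I_p -> R
   (row i is the i-th observation). *)
Definition dotp (R : realType) (p : nat) (a b : 'I_p -> R) : R :=
  \sum_(j < p) a j * b j.

Definition norm1 (R : realType) (p : nat) (b : 'I_p -> R) : R :=
  \sum_(j < p) `|b j|.

Definition norm2 (R : realType) (n : nat) (v : 'I_n -> R) : R :=
  Num.sqrt (\sum_(i < n) v i ^+ 2).

Definition norminf (R : realType) (p : nat) (v : 'I_p -> R) : R :=
  \big[Num.max/0]_(j < p) `|v j|.

Definition mnorminf (R : realType) (n p : nat) (A : 'I_n -> 'I_p -> R) : R :=
  \big[Num.max/0]_(i < n) \big[Num.max/0]_(j < p) `|A i j|.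

Definition trmulv (R : realType) (n p : nat) (A : 'I_n -> 'I_p -> R)
  (v : 'I_n -> R) : 'I_p -> R := fun j => \sum_(i < n) A i j * v i.

(* The set Theta; the infinite series of nonnegative terms is taken in the
   extended reals (it equals +oo when it diverges). *)
Definition Theta (R : realType) (n p : nat) (mu : R -> R)
  (W : 'I_n -> 'I_p -> R) (y : 'I_n -> R) (lambda delta : R) :
  set ('I_p -> R) :=
  [set b | (((n%:R)^-1 *
             norminf (trmulv W (fun i => y i - mu (dotp (W i) b))))%:E
           <= (lambda%:E +
               \sum_(1 <= r <oo)
                 ((delta ^+ r / ((r`!)%:R * Num.sqrt (n%:R))) *
                  norm1 b ^+ r *
                  norm2 (fun i => (derive1n r mu) (dotp (W i) b)))%:E))%E].

From HB Require Import structures.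
From mathcomp Require Import all_boot all_order all_algebra.
From mathcomp Require Import all_classical all_reals all_analysis.
From mathcomp Require Import ring lra.
Set Implicit Arguments. Unset Strict Implicit. Unset Printing Implicit Defensive.
Import Order.TTheory GRing.Theory Num.Theory.
Import numFieldNormedType.Exports.
Local Open Scope classical_set_scope.
Local Open Scope ring_scope.

(* Write mu(x_i' b0) - mu(w_i' b0) as the tail (r >= 1) of the Taylor series
   in powers of -u_i' b0. Since |u_i' b0| <= delta ||b0||_1, Cauchy-Schwarz
   bounds the j-th coordinate of the r-th term of W^T(tail) by
   ||W_j||_2 (delta ||b0||_1)^r / r! ||mu^(r)(W b0)||_2, and the
   standardisation ||W_j||_2 = sqrt n turns this into n times the r-th term of
   the series defining Theta; passing to the limit and adding W^T eps gives the
   claim. *)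

Section Norms.
Variable R : realType.

Lemma le_norminf (p : nat) (v : 'I_p -> R) j : `|v j| <= norminf v.
Proof. exact: (le_bigmax _ (fun j => `|v j|)). Qed.

Lemma le_mnorminf (n p : nat) (A : 'I_n -> 'I_p -> R) i j :
  `|A i j| <= mnorminf A.
Proof.
apply: le_trans (le_bigmax _ (fun i => \big[Num.max/0]_(j < p) `|A i j|) i).
exact: (le_bigmax _ (fun j => `|A i j|)).
Qed.

Lemma norm1_ge0 (p : nat) (b : 'I_p -> R) : 0 <= norm1 b.
Proof. exact: sumr_ge0. Qed.

Lemma norm_dotp_le (p : nat) (u b : 'I_p -> R) (d : R) :
  (forall j, `|u j| <= d) -> `|dotp u b| <= d * norm1 b.
Proof.
move=> ud; rewrite /dotp /norm1 mulr_sumr.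
apply: le_trans (ler_norm_sum _ _ _) _; apply: ler_sum => j _.
by rewrite normrM ler_wpM2r.
Qed.

Lemma sum_normM_le_norm2 (n : nat) (a b : 'I_n -> R) :
  \sum_(i < n) `|a i| * `|b i| <= norm2 a * norm2 b.
Proof.
rewrite /norm2; set A := \sum_(i < n) a i ^+ 2; set B := \sum_(i < n) b i ^+ 2.
have sqr_sum_ge0 (c : 'I_n -> R) : 0 <= \sum_(i < n) c i ^+ 2.
  by apply: sumr_ge0 => i _; exact: sqr_ge0.
have sqr_sum_eq0 (c : 'I_n -> R) i : \sum_(i < n) c i ^+ 2 = 0 -> c i = 0.
  by move=> /psumr_eq0P c0; apply/eqP; rewrite -sqrf_eq0 c0 // => k _; exact: sqr_ge0.
have [A0|A_neq0] := eqVneq A 0.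
  by rewrite big1 ?mulr_ge0 ?sqrtr_ge0 // => i _; rewrite (sqr_sum_eq0 a) ?normr0 ?mul0r.
have [B0|B_neq0] := eqVneq B 0.
  by rewrite big1 ?mulr_ge0 ?sqrtr_ge0 // => i _; rewrite (sqr_sum_eq0 b) ?normr0 ?mulr0.
set sA := Num.sqrt A; set sB := Num.sqrt B.
have sA_gt0 : 0 < sA by rewrite sqrtr_gt0 lt_def A_neq0 sqr_sum_ge0.
have sB_gt0 : 0 < sB by rewrite sqrtr_gt0 lt_def B_neq0 sqr_sum_ge0.
(* AM-GM termwise: [2 sA sB |a_i| |b_i| <= sB^2 a_i^2 + sA^2 b_i^2], then sum. *)
have amgm : (2 * sA * sB) * \sum_(i < n) `|a i| * `|b i| <= (2 * sA * sB) * (sA * sB).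
  have -> : (2 * sA * sB) * (sA * sB) = \sum_(i < n) (a i ^+ 2 * sB ^+ 2 + b i ^+ 2 * sA ^+ 2).
    have eA : A = sA ^+ 2 by rewrite sqr_sqrtr ?sqr_sum_ge0.
    have eB : B = sB ^+ 2 by rewrite sqr_sqrtr ?sqr_sum_ge0.
    by rewrite big_split /= -!mulr_suml -/A -/B eA eB; ring.
  rewrite mulr_sumr; apply: ler_sum => i _.
  rewrite -[a i ^+ 2]real_normK ?num_real // -[b i ^+ 2]real_normK ?num_real //.
  have := sqr_ge0 (`|a i| * sB - `|b i| * sA); nra.
by rewrite -(ler_pM2l (_ : 0 < 2 * sA * sB)) ?mulr_gt0.
Qed.

Lemma norm_weighted_sum_le (n : nat) (w c m : 'I_n -> R) (K : R) :
  0 <= K -> (forall i, `|c i| <= K * `|m i|) ->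
  `|\sum_(i < n) w i * c i| <= K * (norm2 w * norm2 m).
Proof.
move=> K0 cm; apply: le_trans (ler_norm_sum _ _ _) _.
apply: le_trans (_ : \sum_(i < n) K * (`|w i| * `|m i|) <= _).
  apply: ler_sum => i _; rewrite normrM mulrCA; exact: ler_wpM2l.
by rewrite -mulr_sumr ler_wpM2l ?sum_normM_le_norm2.
Qed.

Lemma norm2_standardized (n : nat) (w : 'I_n -> R) :
  (0 < n)%N -> (n%:R)^-1 * \sum_(i < n) w i ^+ 2 = 1 -> norm2 w = Num.sqrt n%:R.
Proof.
move=> n_gt0 w2; have n_neq0 : n%:R != 0 :> R by rewrite pnatr_eq0 -lt0n.
by rewrite /norm2 -(mulVKf n_neq0 (\sum_i _)) w2 mulr1.
Qed.

End Norms.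

Section SeriesBounds.
Variable R : realType.

Lemma taylor_weighted_sum_le (n r : nat) (f : R -> R) (w a h : 'I_n -> R) (d : R) :
  0 <= d -> (forall i, `|h i| <= d) ->
  `|\sum_(i < n) w i * (derive1n r f (a i) / (r`!)%:R * h i ^+ r)| <=
  d ^+ r / (r`!)%:R * (norm2 w * norm2 (fun i => derive1n r f (a i))).
Proof.
move=> d0 hd; have r_fact_gt0 : (0 : R) < (r`!)%:R by rewrite ltr0n fact_gt0.
apply: norm_weighted_sum_le => [|i]; first by rewrite divr_ge0 ?exprn_ge0.
rewrite !normrM normfV normrX (gtr0_norm r_fact_gt0) mulrAC -mulrA mulrC.
by rewrite ler_wpM2r // ler_wpM2r ?invr_ge0 ?ler0n // lerXn2r ?nnegrE.
Qed.

Lemma weighted_series_remainder_le (n : nat) (w : 'I_n -> R)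
    (c : 'I_n -> nat -> R) (l : 'I_n -> R) (t : nat -> R) (s : R) :
  (forall i, series (c i) @ \oo --> l i) ->
  (forall r, (0 < r)%N -> `|\sum_(i < n) w i * c i r| <= t r) ->
  (forall N, \sum_(1 <= r < N) t r <= s) ->
  `|\sum_(i < n) w i * (l i - c i 0%N)| <= s.
Proof.
move=> cvg_c ct ts.
have cvg_rem : `|\sum_(i < n) w i * (series (c i) N - c i 0%N)| @[N --> \oo]
    --> `|\sum_(i < n) w i * (l i - c i 0%N)|.
  apply: cvg_norm; apply: cvg_big => [|i _]; first exact: add_continuous.
  by apply: cvgMl_tmp; apply: cvgB => //; exact: cvg_cst.
apply: (cvgr_to_le cvg_rem); near=> N.
have N_gt0 : (0 < N)%N by near: N; exists 1%N.
have rem_eq i : series (c i) N - c i 0%N = \sum_(1 <= r < N) c i r.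
  by rewrite /series /= big_ltn // addrAC subrr add0r.
under eq_bigr do rewrite rem_eq mulr_sumr.
rewrite exchange_big /=; apply: le_trans (ler_norm_sum _ _ _) _.
apply: le_trans (ts N); apply: ler_sum_nat => r /andP[r_gt0 _]; exact: ct.
Unshelve. all: by end_near.
Qed.

Lemma le_EFin_addr_nneseries (t : nat -> R) (x l : R) :
  (forall r, 0 <= t r) ->
  (forall s, (forall N, \sum_(1 <= r < N) t r <= s) -> x <= l + s) ->
  (x%:E <= l%:E + \sum_(1 <= r <oo) (t r)%:E)%E.
Proof.
move=> t0 xs; have tE0 r : (1 <= r)%N -> xpredT r -> (0 <= (t r)%:E)%E.
  by move=> _ _; rewrite lee_fin.
have := nneseries_ge0 tE0.
case S_eq : (\sum_(1 <= r <oo) (t r)%:E)%E => [s| |] // _; last by rewrite addey // leey.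
rewrite -EFinD lee_fin; apply: xs => N; rewrite -lee_fin -S_eq -sumEFin.
exact: nneseries_lim_ge.
Qed.

End SeriesBounds.

Section GLMTaylorRemainder.
Variables (R : realType) (n p : nat) (mu : R -> R).
Variables (W U : 'I_n -> 'I_p -> R) (beta : 'I_p -> R) (delta : R).
Hypotheses (n_gt0 : (0 < n)%N) (delta_ge0 : 0 <= delta) (U_le : mnorminf U <= delta).

Definition theta_term (r : nat) : R :=
  delta ^+ r / ((r`!)%:R * Num.sqrt n%:R) * norm1 beta ^+ r *
  norm2 (fun i => derive1n r mu (dotp (W i) beta)).

Lemma theta_term_ge0 r : 0 <= theta_term r.
Proof. by rewrite !mulr_ge0 ?exprn_ge0 ?invr_ge0 ?mulr_ge0 ?sqrtr_ge0 ?norm1_ge0. Qed.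

Lemma taylor_term_weighted_le (w : 'I_n -> R) r :
  norm2 w = Num.sqrt n%:R ->
  `|\sum_(i < n) w i *
      (derive1n r mu (dotp (W i) beta) / (r`!)%:R * (- dotp (U i) beta) ^+ r)|
    <= n%:R * theta_term r.
Proof.
move=> w_norm; have Ub_le i : `|- dotp (U i) beta| <= delta * norm1 beta.
  by rewrite normrN; apply: norm_dotp_le => j; exact: le_trans (le_mnorminf U i j) U_le.
apply: le_trans (taylor_weighted_sum_le _ _ _ _ _ Ub_le) _.
  by rewrite mulr_ge0 ?norm1_ge0.
rewrite w_norm /theta_term -{2}(sqr_sqrtr (ler0n R n)) exprMn le_eqVlt.
by apply/predU1l; field; rewrite gt_eqF ?sqrtr_gt0 ?ltr0n // pnatr_eq0 -lt0n fact_gt0.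
Qed.

Lemma taylor_remainder_weighted_le (w l : 'I_n -> R) (s : R) :
  (forall i, series (fun r => derive1n r mu (dotp (W i) beta) / (r`!)%:R *
                              (- dotp (U i) beta) ^+ r) @ \oo --> l i) ->
  norm2 w = Num.sqrt n%:R ->
  (forall N, \sum_(1 <= r < N) theta_term r <= s) ->
  `|\sum_(i < n) w i * (l i - mu (dotp (W i) beta))| <= n%:R * s.
Proof.
move=> taylor_cvg w_norm sum_le.
have taylor0 i : mu (dotp (W i) beta) =
    derive1n 0 mu (dotp (W i) beta) / (0`!)%:R * (- dotp (U i) beta) ^+ 0.
  by rewrite expr0 mulr1 divr1.
under eq_bigr => i _ do rewrite [X in _ - X]taylor0.
apply: (weighted_series_remainder_le taylor_cvg) => [r _|N].
  exact: taylor_term_weighted_le.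
by rewrite -mulr_sumr ler_wpM2l ?ler0n.
Qed.

End GLMTaylorRemainder.

Theorem proposition1 (R : realType) (n p : nat)
  (beta0 : 'I_p -> R) (X U W : 'I_n -> 'I_p -> R) (y : 'I_n -> R)
  (mu : R -> R) (lambda delta : R) :
  (0 < n)%N -> (0 < p)%N ->
  (forall i j, W i j = X i j + U i j) ->
  (forall j, (n%:R)^-1 * \sum_(i < n) W i j = 0) ->
  (forall j, (n%:R)^-1 * \sum_(i < n) W i j ^+ 2 = 1) ->
  (forall (r : nat) (t : R), derivable (derive1n r mu) t 1) ->
  (forall i : 'I_n,
     series (fun r : nat => (derive1n r mu) (dotp (W i) beta0) / (r`!)%:R *
                            (- dotp (U i) beta0) ^+ r)
       @ \oo --> mu (dotp (X i) beta0)) ->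
  0 <= lambda -> 0 <= delta ->
  (n%:R)^-1 * norminf (trmulv W (fun i => y i - mu (dotp (X i) beta0)))
    <= lambda ->
  mnorminf U <= delta ->
  Theta mu W y lambda delta beta0.
Proof.
move=> n_gt0 _ _ _ W2_mean _ taylor_cvg lambda_ge0 delta_ge0 eps_le U_le.
apply: le_EFin_addr_nneseries => [r|s sum_le]; first exact: theta_term_ge0.
have s_ge0 : 0 <= s by have := sum_le 0%N; rewrite big_geq.
rewrite ler_pdivrMl ?ltr0n // mulrDr; apply: bigmax_le => [|j _].
  by rewrite addr_ge0 ?mulr_ge0 ?ler0n.
pose eps i := y i - mu (dotp (X i) beta0).
have split_resid : trmulv W (fun i => y i - mu (dotp (W i) beta0)) j =
    trmulv W eps j + \sum_(i < n) W i j * (mu (dotp (X i) beta0) - mu (dotp (W i) beta0)).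
  by rewrite -big_split; apply: eq_bigr => i _ /=; rewrite -mulrDr addrA subrK.
rewrite split_resid; apply: le_trans (ler_normD _ _) (lerD _ _).
  by apply: le_trans (le_norminf _ j) _; rewrite -ler_pdivrMl ?ltr0n.
apply: (taylor_remainder_weighted_le n_gt0 delta_ge0 U_le taylor_cvg) => //.
exact: norm2_standardized.
Qed.
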